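(* Let $n$ be a non-negative integer and let $a,b$ be integers with $\gcd(a,b)=1$, $a+b\neq 0$ and $a+b\neq \pm 1$. For natural numbers $N$ put $B(N,2,a,b)=\sum_{k=0}^{N}\binom{N}{k}^2 a^{N-k}b^k$. Then $$\omega_{a+b}\big(B(2n,2,a,b)\big)=\omega_{a+b}\Big(\binom{2n}{n}\Big),\qquad \omega_{a+b}\big(B(2n+1,2,a,b)\big)=1+\omega_{a+b}\Big((2n+1)\binom{2n}{n}\Big).$$
   Context: For an integer $x$ with $x\neq 0$ and $x\neq\pm1$ and a nonzero integer $y$, $\omega_x(y)$ denotes the largest non-negative integer $e$ such that $x^e$ divides $y$ (when $x$ is a prime $p$ this is the $p$-adic valuation $v_p(y)$). *)

From mathcomp Require Import all_boot all_order all_algebra.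
Set Implicit Arguments. Unset Strict Implicit. Unset Printing Implicit Defensive.
Import Order.TTheory GRing.Theory Num.Theory.
Local Open Scope ring_scope.

(* omega x y : the largest e such that x^e divides y (for x <> 0, +-1, y <> 0).
   For such x,y, x^e | y forces e < |y|, so the bounded maximum over
   e <= |y| is exactly the largest such e. (Junk value 0 when y = 0.) *)
Definition omega (x y : int) : nat :=
  (\max_(e < `|y|%N.+1 | (x ^+ e %| y)%Z) (e : nat))%N.

Definition B2 (N : nat) (a b : int) : int :=
  \sum_(k < N.+1) ('C(N, k) ^ 2)%:Z * a ^+ (N - k) * b ^+ k.

(* Put s = a + b and p = a b.  Grouping the terms of B(N) by the multinomial
   coefficients T(N, j) = N! / (j!^2 (N - 2j)!) gives
     B(N) = sum_(j <= N/2) T(N, j) p^j s^(N - 2j).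
   As p is coprime to s, the last term j = n := floor(N/2) has s-valuation
   odd N + omega_s(T(N, n)), and every other term is divisible by one more power
   of s: for i = n - j we have T(N, j) T(N - 2j, i) = T(N, n) C(n, i)^2, and the
   factor T(N - 2j, i), which is C(2i, i) or (2i + 1) C(2i, i), has all its prime
   exponents below 2i because C(2i, i) < 4^i and (2i + 1) C(2i, i) < 9^i; so
   trading it for s^(2i) gains a factor s. *)

From mathcomp Require Import all_boot all_order all_algebra zify ring.
Set Implicit Arguments. Unset Strict Implicit. Unset Printing Implicit Defensive.
Import GRing.Theory.
Local Open Scope ring_scope.

Section Trinomial.
Local Open Scope nat_scope.

Definition trinomial N j := 'C(N, j) * 'C(N - j, j).

Lemma trinomial_fact N j : j.*2 <= N ->
  trinomial N j * (j`! * j`! * (N - j.*2)`!) = N`!.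
Proof.
move=> le2jN; have lejN : j <= N by lia.
rewrite -(bin_fact lejN) -(bin_fact (_ : j <= N - j)); last by lia.
by rewrite (_ : N - j - j = N - j.*2); [rewrite /trinomial; ring | lia].
Qed.

Lemma trinomial_small N j : N < j.*2 -> trinomial N j = 0.
Proof. by move=> ltN2j; rewrite /trinomial [in X in _ * X]bin_small ?muln0 //; lia. Qed.

Lemma trinomial_gt0 N j : (0 < trinomial N j) = (j.*2 <= N).
Proof.
rewrite /trinomial muln_gt0 !bin_gt0; apply/andP/idP => [|le2jN]; first lia.
by split; lia.
Qed.

Lemma trinomial_double m : trinomial m.*2 m = 'C(m.*2, m).
Proof. by rewrite /trinomial -addnn addKn binn muln1. Qed.

Lemma trinomial_doubleS m : trinomial m.*2.+1 m = m.*2.+1 * 'C(m.*2, m).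
Proof.
have eSm : m.*2.+1 - m = m.+1 by lia.
by rewrite /trinomial eSm binSn mulnC -{1}eSm -mul_bin_down.
Qed.

Lemma mul_bin_trinomial N j m : j.*2 + m <= N ->
  'C(N, j + m) * 'C(j + m, j) * 'C(N - (j + m), j) = trinomial N j * 'C(N - j.*2, m).
Proof.
move=> le_N; set r := N - j.*2 - m.
apply/eqP; rewrite -(@eqn_pmul2r (j`! * j`! * m`! * r`!)) ?muln_gt0 ?fact_gt0 //; apply/eqP.
have fact_jm := bin_fact (leq_addr m j); rewrite addKn in fact_jm.
have fact_rest := @bin_fact (N - (j + m)) j.
rewrite (_ : N - (j + m) - j = r) in fact_rest; last by rewrite /r; lia.
have fact_N := @bin_fact N (j + m).
have fact_m := @bin_fact (N - j.*2) m.
transitivity ('C(N, j + m) * ('C(j + m, j) * (j`! * m`!))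
              * ('C(N - (j + m), j) * (j`! * r`!))); first ring.
rewrite fact_jm fact_rest ?fact_N; [|lia..].
transitivity (trinomial N j * (j`! * j`! * ('C(N - j.*2, m) * (m`! * r`!)))); last ring.
by rewrite fact_m ?trinomial_fact //; lia.
Qed.

Lemma trinomial_mul N j i : (j + i).*2 <= N ->
  trinomial N j * trinomial (N - j.*2) i = trinomial N (j + i) * 'C(j + i, i) ^ 2.
Proof.
move=> le_N; set r := N - (j + i).*2.
apply/eqP; rewrite -(@eqn_pmul2r (j`! * j`! * (i`! * i`!) * r`!)) ?muln_gt0 ?fact_gt0 //.
apply/eqP; have fact_rest := @trinomial_fact (N - j.*2) i.
rewrite (_ : N - j.*2 - i.*2 = r) in fact_rest; last by rewrite /r; lia.
have fact_ji := bin_fact (leq_addl j i); rewrite addnK in fact_ji.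
transitivity (trinomial N j * (j`! * j`!
              * (trinomial (N - j.*2) i * (i`! * i`! * r`!)))); first ring.
rewrite fact_rest ?trinomial_fact; [|lia..].
by rewrite -(trinomial_fact le_N) -{1 2}fact_ji; ring.
Qed.

Lemma bin_centralS m : m.+1 * 'C(m.+1.*2, m.+1) = (m.*2.+1).*2 * 'C(m.*2, m).
Proof.
have := mul_bin_down m.*2.+1 m; rewrite -mul_bin_diag /= (_ : m.*2.+1 - m = m.+1); lia.
Qed.

Lemma bin_central_le m : 0 < m -> 2 * 'C(m.*2, m) <= 4 ^ m.
Proof.
case: m => // m _; elim: m => // m IH.
have := bin_centralS m.+1; rewrite expnS; nia.
Qed.

Lemma odd_bin_central_lt m : 0 < m -> m.*2.+1 * 'C(m.*2, m) < 9 ^ m.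
Proof.
move=> m_gt0; suff : m.*2.+1 * 4 ^ m < 2 * 9 ^ m by have := bin_central_le m_gt0; nia.
case: m m_gt0 => // m _; elim: m => // m IH.
rewrite (expnS 4) (expnS 9); have := expn_gt0 4 m.+1; nia.
Qed.

Lemma logn_lt_exp p c k D : prime p -> c <= p -> 0 < D -> D < c ^ k -> logn p D < k.
Proof.
move=> p_pr le_cp D_gt0 lt_D; rewrite -(ltn_exp2l _ _ (prime_gt1 p_pr)).
have := dvdn_leq D_gt0 (pfactor_dvdnn p D); have k_gt0 : 0 < k by case: k lt_D => //; lia.
by have := leq_exp2r c p k_gt0; rewrite le_cp; lia.
Qed.

Lemma logn_trinomial_central_lt p (b : bool) m : prime p -> 0 < m ->
  logn p (trinomial (b + m.*2) m) < m.*2.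
Proof.
move=> p_pr m_gt0; have C_gt0 : 0 < 'C(m.*2, m) by rewrite bin_gt0 -addnn leq_addr.
have exp2_double : 2 ^ m.*2 = 4 ^ m by rewrite -mul2n expnM.
have exp3_double : 3 ^ m.*2 = 9 ^ m by rewrite -mul2n expnM.
have lt_even : logn p 'C(m.*2, m) < m.*2.
  apply: (logn_lt_exp (c := 2)); rewrite ?prime_gt1 ?exp2_double //.
  by have := bin_central_le m_gt0; lia.
case: b; rewrite /= ?trinomial_doubleS ?trinomial_double //.
have [p2|p_neq2] := eqVneq p 2.
  by rewrite p2 in lt_even *; rewrite logn_Gauss // coprime2n /= odd_double.
apply: (logn_lt_exp (c := 3)); rewrite ?muln_gt0 ?exp3_double //.
  by have := prime_gt1 p_pr; lia.
exact: odd_bin_central_lt.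
Qed.

Lemma dvdn_expS_of_logn_lt s X D k w : 1 < s -> 0 < D ->
  (forall p, prime p -> logn p D < k) -> s ^ w %| X * D -> s ^ w.+1 %| X * s ^ k.
Proof.
move=> s_gt1 D_gt0 lognD dvd_XD; have [->|X_gt0] := posnP X; first by rewrite mul0n dvdn0.
have s_gt0 : 0 < s by lia.
apply/dvdn_partP => [|p]; first by rewrite expn_gt0 s_gt0.
rewrite mem_primes => /and3P[p_pr _]; rewrite Euclid_dvdX // => /andP[ps _].
rewrite p_part pfactor_dvdn // ?muln_gt0 ?X_gt0 ?expn_gt0 ?s_gt0 //.
have XD_gt0 : 0 < X * D by rewrite muln_gt0 X_gt0.
have := dvdn_leq_log p XD_gt0 dvd_XD.
have := lognD p p_pr; have : 0 < logn p s by rewrite logn_gt0 mem_primes p_pr s_gt0.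
(* With e = logn p s > 0: w e <= logn p X + (k - 1) yields (w + 1) e <= logn p X + k e. *)
rewrite !lognM ?expn_gt0 ?s_gt0 // !lognX; nia.
Qed.

Lemma dvdn_trinomial_expS N j s w : 1 < s -> j < N./2 ->
  s ^ w %| trinomial N N./2 -> s ^ w.+1 %| trinomial N j * s ^ (N./2 - j).*2.
Proof.
move=> s_gt1 lt_j dvd_top; have eN := odd_double_half N.
have [i eNj] : exists i, N./2 = j + i by exists (N./2 - j); lia.
rewrite eNj addKn.
apply: (dvdn_expS_of_logn_lt (D := trinomial (N - j.*2) i)) => //.
- by rewrite trinomial_gt0; lia.
- move=> p p_pr; rewrite (_ : N - j.*2 = odd N + i.*2); last by lia.
  by rewrite logn_trinomial_central_lt //; lia.
- by rewrite trinomial_mul -?eNj; [exact: dvdn_mulr | lia].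
Qed.
End Trinomial.

Section TrinomialExpansion.
Variable R : comPzSemiRingType.
Implicit Types x y : R.

Lemma Vandermonde_diag k l : (\sum_(j < (k + l).+1) 'C(k, j) * 'C(l, j))%N = 'C(k + l, k).
Proof.
rewrite -(bin_sub (leq_addr l k)) addKn -binomial.Vandermonde.
rewrite (big_ord_widen (k + l).+1 (fun j => 'C(k, j) * 'C(l, l - j))%N) ?ltnS ?leq_addl //.
rewrite [RHS]big_mkcond /=; apply: eq_bigr => j _.
case: ifP => lt_jl; first by rewrite bin_sub.
by rewrite [binomial l j]bin_small ?muln0 //; lia.
Qed.

Lemma sum_bin_trinomial x y N j :
  \sum_(k < N.+1) x ^+ (N - k) * y ^+ k *+ ('C(N, k) * 'C(k, j) * 'C(N - k, j))
  = (x * y) ^+ j * (x + y) ^+ (N - j.*2) *+ trinomial N j.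
Proof.
have [ltN|le2jN] := ltnP N j.*2.
  rewrite trinomial_small // mulr0n big1 // => k _.
  have [lt_kj|le_jk] := ltnP k j; first by rewrite [binomial k j]bin_small ?muln0 ?mul0n.
  by rewrite [binomial (N - k) j]bin_small ?muln0 //; lia.
have [M ->] : exists M, N = (j.*2 + M)%N by exists (N - j.*2)%N; lia.
have -> : ((j.*2 + M).+1 = j + M.+1 + j)%N by lia.
rewrite !big_split_ord /= big1 ?add0r => [|k _]; last first.
  by rewrite [binomial k j]bin_small ?muln0 ?mul0n.
rewrite [X in _ + X]big1 ?addr0 => [|k _]; last first.
  by rewrite [binomial (_ - _) j]bin_small ?muln0 //; have := ltn_ord k; lia.
rewrite ssrnat.addKn exprDn mulr_sumr -sumrMnl; apply: eq_bigr => -[m /= lt_mM] _.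
rewrite mul_bin_trinomial; last by lia.
rewrite mulnC mulrnA mulrnAr (_ : j.*2 + M - (j + m) = j + (M - m))%N; last by lia.
by rewrite ssrnat.addKn exprMn !exprD; congr (_ *+ _ *+ _); ring.
Qed.

Lemma sum_bin_sqr_trinomial x y N :
  \sum_(k < N.+1) x ^+ (N - k) * y ^+ k *+ ('C(N, k) ^ 2)
  = \sum_(j < N./2.+1) (x * y) ^+ j * (x + y) ^+ (N - j.*2) *+ trinomial N j.
Proof.
transitivity (\sum_(j < N.+1) \sum_(k < N.+1)
    x ^+ (N - k) * y ^+ k *+ ('C(N, k) * 'C(k, j) * 'C(N - k, j))).
  rewrite exchange_big; apply: eq_bigr => k _; rewrite sumrMnr.
  have le_kN : (k <= N)%N by rewrite -ltnS.
  have := Vandermonde_diag k (N - k); rewrite subnKC // => sum_bin.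
  by under eq_bigr do rewrite -mulnA; rewrite -big_distrr /= sum_bin.
have le_half : (N./2.+1 <= N.+1)%N by have := odd_double_half N; lia.
rewrite (big_ord_widen _ (fun j => (x * y) ^+ j * (x + y) ^+ (N - j.*2) *+ trinomial N j) le_half).
rewrite [RHS]big_mkcond; apply: eq_bigr => j _; rewrite sum_bin_trinomial.
case: ifP => // /negbT; rewrite -leqNgt => lt_half.
by rewrite trinomial_small ?mulr0n //; have := odd_double_half N; lia.
Qed.
End TrinomialExpansion.

Section Omega.
Variable x : int.
Hypothesis x_gt1 : (1 < `|x|)%N.

Lemma leq_dvdz_exp y e : y != 0 -> (x ^+ e %| y)%Z -> (e <= `|y|)%N.
Proof.
move=> y_neq0; rewrite dvdzE abszX => /(dvdn_leq _); rewrite absz_gt0 => /(_ y_neq0).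
by have := ltn_expl e x_gt1; lia.
Qed.

Lemma omega_dvd y : (x ^+ omega x y %| y)%Z.
Proof.
have dvd0 : (x ^+ (@ord0 `|y|) %| y)%Z by rewrite expr0 dvd1z.
by rewrite /omega (bigop.bigmax_eq_arg _ dvd0); case: arg_maxnP.
Qed.

Lemma dvdz_exp_omega y e : y != 0 -> (x ^+ e %| y)%Z -> (e <= omega x y)%N.
Proof.
move=> y_neq0 dvd_e; have e_lt : (e < `|y|.+1)%N by rewrite ltnS leq_dvdz_exp.
exact: (@leq_bigmax_cond _ (fun i : 'I_(`|y|.+1) => (x ^+ i %| y)%Z) val (Ordinal e_lt)).
Qed.

Lemma omega_ndvd y : y != 0 -> ~~ (x ^+ (omega x y).+1 %| y)%Z.
Proof. by move=> y_neq0; apply/negP => /(dvdz_exp_omega y_neq0); rewrite ltnn. Qed.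

Lemma omega_eq y e : (x ^+ e %| y)%Z -> ~~ (x ^+ e.+1 %| y)%Z -> omega x y = e.
Proof.
move=> dvd_e ndvd_eS; have y_neq0 : y != 0 by apply: contraNneq ndvd_eS => ->.
apply/eqP; rewrite eqn_leq dvdz_exp_omega // andbT leqNgt.
apply: contra ndvd_eS => /(dvdz_exp2l x) dvd_exp; exact: dvdz_trans dvd_exp (omega_dvd y).
Qed.

Lemma omega_mul_exp k y : y != 0 -> omega x (x ^+ k * y) = (k + omega x y)%N.
Proof.
have xk_neq0 : x ^+ k != 0 by rewrite expf_neq0 // -absz_gt0; lia.
move=> y_neq0; apply: omega_eq; rewrite -?addnS exprD dvdz_mul2l //.
  exact: omega_dvd.
exact: omega_ndvd.
Qed.

Lemma omega_mul_coprime y p : coprimez x p -> omega x (y * p) = omega x y.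
Proof.
move=> cop_xp; have [->|y_neq0] := eqVneq y 0; first by rewrite mul0r.
apply: omega_eq; first by apply: dvdz_mulr; exact: omega_dvd.
by rewrite Gauss_dvdzl; [exact: omega_ndvd | exact: coprimezXl].
Qed.

Lemma omega_addr y z :
  y != 0 -> (x ^+ (omega x y).+1 %| z)%Z -> omega x (y + z) = omega x y.
Proof.
move=> y_neq0 dvd_z; apply: omega_eq.
  by rewrite rpredD ?omega_dvd // (dvdz_trans _ dvd_z) // dvdz_exp2l.
by rewrite rpredDr //; exact: omega_ndvd.
Qed.

Lemma omega_addr_neq0 y z : y != 0 -> (x ^+ (omega x y).+1 %| z)%Z -> y + z != 0.
Proof.
move=> y_neq0 dvd_z; apply: contraNneq (omega_ndvd y_neq0) => yz0.
by rewrite -[X in (_ %| X)%Z](addrK z) yz0 sub0r rpredN.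
Qed.
End Omega.

Lemma B2_trinomial N a b : B2 N a b
  = \sum_(j < N./2.+1) (trinomial N j)%:R * (a * b) ^+ j * (a + b) ^+ (N - j.*2).
Proof.
rewrite /B2 (eq_bigr (fun k : 'I_N.+1 => a ^+ (N - k) * b ^+ k *+ 'C(N, k) ^ 2)) => [|k _].
  by rewrite sum_bin_sqr_trinomial; apply: eq_bigr => j _; rewrite -mulrA mulr_natl.
by rewrite -natz -mulrA mulr_natl.
Qed.

Lemma coprimez_add_mul (a b : int) : coprimez a b -> coprimez (a + b) (a * b).
Proof.
move=> cop_ab; rewrite coprimezMr /coprimez [gcdz _ a]gcdzC gcdzDl.
by rewrite [gcdz (a + b) b]gcdzC addrC gcdzDl [gcdz b a]gcdzC andbb.
Qed.

Lemma omega_B2 N (a b : int) : coprimez a b -> (1 < `|(a + b)%R|)%N ->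
  B2 N a b != 0 /\
  omega (a + b) (B2 N a b) = (odd N + omega (a + b) (trinomial N N./2)%:Z)%N.
Proof.
move=> /coprimez_add_mul cop_sp s_gt1; have eN := odd_double_half N.
set s := a + b in cop_sp s_gt1 *; set p := a * b in cop_sp *; set n := N./2 in eN *.
set w := omega s (trinomial N n)%:Z.
have s_neq0 : s != 0 by rewrite -absz_gt0; lia.
have p_neq0 : p != 0 by apply: contraTneq cop_sp => ->; rewrite /coprimez gcdz0; lia.
have c_neq0 : (trinomial N n)%:Z != 0 by rewrite eqz_nat -lt0n trinomial_gt0; lia.
set top := (trinomial N n)%:R * p ^+ n * s ^+ (N - n.*2).
have top_neq0 : top != 0 by rewrite /top natz !mulf_neq0 ?expf_neq0.
have top_omega : omega s top = (odd N + w)%N.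
  rewrite /top natz mulrC (_ : N - n.*2 = odd N)%N; last by lia.
  by rewrite omega_mul_exp ?omega_mul_coprime ?coprimezXr // mulf_neq0 ?expf_neq0.
rewrite B2_trinomial big_ord_recr /= addrC -/top.
set rest := \sum_(i < _) _.
have dvd_rest : (s ^+ (omega s top).+1 %| rest)%Z.
  apply: rpred_sum => -[j /= lt_jn] _; rewrite top_omega.
  rewrite (_ : N - j.*2 = odd N + (n - j).*2)%N; last by lia.
  rewrite -addnS !exprD mulrCA dvdz_mul2l ?expf_neq0 // mulrAC dvdz_mulr //.
  rewrite natz dvdzE abszM !abszX absz_nat dvdn_trinomial_expS //.
  by have := omega_dvd s (trinomial N n)%:Z; rewrite dvdzE abszX.
by split; [exact: omega_addr_neq0 dvd_rest | rewrite omega_addr].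
Qed.

Theorem theorem1 (n : nat) (a b : int) :
  gcdz a b = 1%N -> a + b != 0 -> a + b != 1 -> a + b != -1 ->
  [/\ B2 n.*2 a b != 0,
      omega (a + b) (B2 n.*2 a b) = omega (a + b) ('C(n.*2, n))%:Z,
      B2 n.*2.+1 a b != 0 &
      omega (a + b) (B2 n.*2.+1 a b)
        = (1 + omega (a + b) ((n.*2.+1 * 'C(n.*2, n))%N)%:Z)%N].
Proof.
move=> gcd_ab s_neq0 s_neq1 s_neqN1.
have cop : coprimez a b by rewrite /coprimez gcd_ab.
have s_gt1 : (1 < `|(a + b)%R|)%N.
  by move: s_neq0 s_neq1 s_neqN1; case: (a + b) => [[|[|k]]|[|k]].
have [even_neq0 even_omega] := omega_B2 n.*2 cop s_gt1.
have [odd_neq0 odd_omega] := omega_B2 n.*2.+1 cop s_gt1.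
rewrite odd_double doubleK trinomial_double in even_omega.
rewrite /= odd_double uphalf_double trinomial_doubleS in odd_omega.
by split.
Qed.
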